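(* The sheaf $\mathcal{C}_{X_{\mathrm{crs}}}$ is not soft: for the closed subset $A=\bigcup_{n\ge1}e_n^0\subset X_{\mathrm{crs}}$ with inclusion $j:A\to X_{\mathrm{crs}}$, the restriction map $H^0(X_{\mathrm{crs}},\mathcal{C}_{X_{\mathrm{crs}}})\to H^0(A,j^{-1}\mathcal{C}_{X_{\mathrm{crs}}})$ is not surjective.
   Context: Let $X$ be the following 2-dimensional CW-complex. Its 0-cells are $e_n^0$, $n\ge 0$; the point $x=e_0^0$ is called the origin. For each $n\ge1$ there are two 1-cells $e_n^1, e_{-n}^1$, each joining $x$ to $e_n^0$, so that $e_0^0\cup e_n^0\cup e_n^1\cup e_{-n}^1$ is homeomorphic to a circle; for each $n\ge1$ a 2-cell $e_n^2$ is attached via a homeomorphism $\varphi_n:S^1\to e_0^0\cup e_n^0\cup e_n^1\cup e_{-n}^1$. Thus each closed 2-cell $\overline{e_n^2}$ is a closed disk having $x$ and $e_n^0$ on its boundary, and $X$ is a wedge at $x$ of countably many closed disks, carrying the CW (weak) topology. The coarser topology on the set $X$ consists of all subsets $U\subset X$ that are open in the CW-topology and either do not contain $x$, or contain $\overline{e_n^2}\smallsetminus e_n^0$ for all but finitely many $n\ge1$. The set $X$ with this coarser topology is denoted $X_{\mathrm{crs}}$. $\mathcal{C}_{X_{\mathrm{crs}}}$ denotes the sheaf of continuous real-valued functions on $X_{\mathrm{crs}}$; $j^{-1}$ is the inverse image sheaf. *)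

From Stdlib Require Import Reals Classical.
Open Scope R_scope.

(** Each closed 2-cell
    closure is modelled by the closed unit disk in R^2; the origin x
    corresponds to the boundary point (-1,0) of every disk, and the
    0-cell e_n^0 to the boundary point (1,0) of the n-th disk (n >= 1). *)
Inductive Xt : Type := Orig | Pt (n : nat) (u v : R).

Definition inDisk (u v : R) : Prop := u * u + v * v <= 1.

Definition inX (t : Xt) : Prop :=
  match t with
  | Orig => True
  | Pt n u v => (1 <= n)%nat /\ inDisk u v /\ ~ (u = -1 /\ v = 0)
  end.

Definition X : Type := {t : Xt | inX t}.

Definition origin : X := exist inX Orig I.

Definition e0 (n : nat) : Xt := Pt n 1 0.

Definition liftU (U : X -> Prop) (t : Xt) : Prop :=
  exists z : X, proj1_sig z = t /\ U z.

(** Preimage of U under the characteristic map phi_n : closed disk -> X. *)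
Definition cellPre (n : nat) (U : X -> Prop) (u v : R) : Prop :=
  ((u = -1 /\ v = 0) /\ liftU U Orig) \/
  (~ (u = -1 /\ v = 0) /\ liftU U (Pt n u v)).

Definition open_in_disk (S : R -> R -> Prop) : Prop :=
  forall u v, inDisk u v -> S u v ->
    exists eps, 0 < eps /\
      forall u' v', inDisk u' v' ->
        (u' - u) * (u' - u) + (v' - v) * (v' - v) < eps * eps -> S u' v'.

Definition cw_open (U : X -> Prop) : Prop :=
  forall n, (1 <= n)%nat -> open_in_disk (cellPre n U).

Definition crs_open (U : X -> Prop) : Prop :=
  cw_open U /\
  (~ U origin \/
   exists N : nat, forall n, (N <= n)%nat -> (1 <= n)%nat ->
     forall u v, inDisk u v -> ~ (u = 1 /\ v = 0) -> cellPre n U u v).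

Definition isA (z : X) : Prop :=
  exists n, (1 <= n)%nat /\ proj1_sig z = e0 n.

Definition continuous_on (V : X -> Prop) (f : X -> R) : Prop :=
  forall O : R -> Prop, open_set O ->
    exists U, crs_open U /\ forall z, V z -> (O (f z) <-> U z).

Definition same_germ (z : X) (V1 : X -> Prop) (f1 : X -> R)
  (V2 : X -> Prop) (f2 : X -> R) : Prop :=
  exists W, crs_open W /\ W z /\
    forall y, W y -> V1 y /\ V2 y /\ f1 y = f2 y.

(** A global section of j^{-1} C_{X_crs} over A: for every a in A a germ
    at a (represented by an open neighbourhood V a and a continuous f a on it),
    such that locally the germs are induced by a single continuous function on
    an open subset of X_crs. *)
Definition jinv_section (V : X -> X -> Prop) (f : X -> X -> R) : Prop :=
  (forall a, isA a -> crs_open (V a) /\ V a a /\ continuous_on (V a) (f a)) /\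
  (forall a, isA a -> exists (W : X -> Prop) (g : X -> R),
      crs_open W /\ W a /\ continuous_on W g /\
      forall b, isA b -> W b -> same_germ b W g (V b) (f b)).

Definition in_restriction_image (V : X -> X -> Prop) (f : X -> X -> R) : Prop :=
  exists g : X -> R, continuous_on (fun _ => True) g /\
    forall a, isA a -> same_germ a (fun _ => True) g (V a) (f a).

From Stdlib Require Import Reals Classical Lra Lia ProofIrrelevance.
Open Scope R_scope.

(** Every set containing the complement X \ A is open in X_crs: it contains
    each closed disk minus at most one boundary point, and it contains the
    whole punctured disks near the origin.  Hence X \ A is open (so A is
    closed), and each a in A has the open neighbourhood (X \ A) ∪ {a}; on
    these neighbourhoods the constants n (at a = e_n^0) form a section of
    j^{-1} C over A.

    It does not extend: a continuous g on X_crs is eventually bounded on the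
    vertices e_n^0.  Indeed the neighbourhood g^{-1}(g(x)-1, g(x)+1) of the
    origin contains the radii of all but finitely many disks, while if
    g(e_n^0) > g(x)+1 the open set g^{-1}(g(x)+1, +oo) contains e_n^0, hence
    (CW topology) a point of the radius of disk n near e_n^0. *)

Lemma X_ext (z z' : X) : proj1_sig z = proj1_sig z' -> z = z'.
Proof.
  destruct z as [t p], z' as [t' p']; simpl; intros ->.
  f_equal; apply proof_irrelevance.
Qed.

Lemma liftU_meet (U U' : X -> Prop) (t : Xt) :
  liftU U t -> liftU U' t -> exists z, U z /\ U' z.
Proof.
  intros [z [Hz HU]] [z' [Hz' HU']].
  exists z; split; [exact HU|].
  replace z with z'; [exact HU'|apply X_ext; congruence].
Qed.

Lemma vertex_inX (n : nat) : (1 <= n)%nat -> inX (e0 n).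
Proof. intros Hn; simpl; unfold inDisk; repeat split; [exact Hn|lra|lra]. Qed.

Definition vertex (n : nat) (Hn : (1 <= n)%nat) : X :=
  exist inX (e0 n) (vertex_inX n Hn).

Lemma vertex_isA (n : nat) (Hn : (1 <= n)%nat) : isA (vertex n Hn).
Proof. exists n; split; [exact Hn|reflexivity]. Qed.

Lemma origin_notA : ~ isA origin.
Proof. intros [m [_ H]]; discriminate H. Qed.

Lemma open_in_disk_cofinite (S : R -> R -> Prop) (p q : R) :
  (forall u v, inDisk u v -> ~ (u = p /\ v = q) -> S u v) -> open_in_disk S.
Proof.
  intros HS u v Hd Huv.
  destruct (classic (S p q)) as [Hpq|Hpq].
  - exists 1; split; [lra|]; intros u' v' Hd' _.
    destruct (classic (u' = p /\ v' = q)) as [[-> ->]|Hne]; auto.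
  - assert (Hne : ~ (u = p /\ v = q)) by (intros [-> ->]; exact (Hpq Huv)).
    set (d := (u - p) * (u - p) + (v - q) * (v - q)).
    assert (Hd0 : 0 < d).
    { unfold d; destruct (Req_dec u p) as [Hu|Hu].
      - assert (Hvq : v - q <> 0) by (intro; apply Hne; split; lra).
        pose proof (Rsqr_pos_lt _ Hvq) as Hs; pose proof (Rle_0_sqr (u - p)).
        unfold Rsqr in *; lra.
      - assert (Hup : u - p <> 0) by lra.
        pose proof (Rsqr_pos_lt _ Hup) as Hs; pose proof (Rle_0_sqr (v - q)).
        unfold Rsqr in *; lra. }
    exists (sqrt d); split; [apply sqrt_lt_R0; exact Hd0|].
    intros u' v' Hd' Hlt; rewrite sqrt_sqrt in Hlt by lra.
    apply HS; [exact Hd'|]; intros [-> ->]; unfold d in Hlt; nra.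
Qed.

Lemma cellPre_of_co_A (U : X -> Prop) (n : nat) (u v : R) :
  (1 <= n)%nat -> (forall z, ~ isA z -> U z) ->
  inDisk u v -> ~ (u = 1 /\ v = 0) -> cellPre n U u v.
Proof.
  intros Hn HU Hd Hne.
  destruct (classic (u = -1 /\ v = 0)) as [Hm|Hm].
  - left; split; [exact Hm|].
    exists origin; split; [reflexivity|apply HU, origin_notA].
  - right; split; [exact Hm|].
    exists (exist inX (Pt n u v) (conj Hn (conj Hd Hm))); split; [reflexivity|].
    apply HU; intros [m [_ Hq]]; injection Hq; intros; apply Hne; split; auto.
Qed.

Lemma crs_open_of_co_A (U : X -> Prop) :
  (forall z, ~ isA z -> U z) -> crs_open U.
Proof.
  intros HU; split.
  - intros n Hn; apply (open_in_disk_cofinite _ 1 0).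
    intros u v; apply cellPre_of_co_A; assumption.
  - right; exists 0%nat; intros n _ Hn u v; apply cellPre_of_co_A; assumption.
Qed.

Lemma crs_open_empty : crs_open (fun _ => False).
Proof.
  split; [|left; auto].
  intros n _ u v _ [[_ [z [_ F]]]|[_ [z [_ F]]]]; contradiction.
Qed.

Lemma continuous_on_const (V : X -> Prop) (c : R) :
  continuous_on V (fun _ => c).
Proof.
  intros O _; destruct (classic (O c)) as [H|H].
  - exists (fun _ => True); split; [apply crs_open_of_co_A; auto|tauto].
  - exists (fun _ => False); split; [exact crs_open_empty|tauto].
Qed.

Definition star (a : X) : X -> Prop := fun z => ~ isA z \/ z = a.

Lemma star_open (a : X) : crs_open (star a).
Proof. apply crs_open_of_co_A; unfold star; auto. Qed.

Definition disk_index (z : X) : R :=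
  match proj1_sig z with Orig => 0 | Pt n _ _ => INR n end.

(** The germs of the constants n at e_n^0 form a section of j^{-1} C over A:
    two distinct points of A have disjoint neighbourhoods star a. *)
Lemma index_section : jinv_section star (fun a _ => disk_index a).
Proof.
  split.
  - intros a _; split; [exact (star_open a)|].
    split; [right; reflexivity|apply continuous_on_const].
  - intros a _; exists (star a), (fun _ => disk_index a).
    split; [exact (star_open a)|]; split; [right; reflexivity|].
    split; [apply continuous_on_const|].
    intros b Hb [Hnb|Hba]; [contradiction|subst b].
    exists (star a); split; [exact (star_open a)|].
    split; [right; reflexivity|auto].
Qed.

Lemma same_germ_value (z : X) (V1 V2 : X -> Prop) (f1 f2 : X -> R) :
  same_germ z V1 f1 V2 f2 -> f1 z = f2 z.
Proof. intros [W [_ [HWz HW]]]; apply HW, HWz. Qed.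

Lemma open_interval (a b : R) : open_set (fun r => a < r < b).
Proof.
  intros r Hr.
  assert (Hpos : 0 < Rmin (r - a) (b - r)) by (apply Rmin_glb_lt; lra).
  exists (mkposreal _ Hpos); intros y Hy; unfold disc in Hy; simpl in Hy.
  apply Rabs_def2 in Hy.
  pose proof (Rmin_l (r - a) (b - r)); pose proof (Rmin_r (r - a) (b - r)); lra.
Qed.

Lemma origin_nbhd_contains_radii (U : X -> Prop) :
  crs_open U -> U origin -> exists N : nat,
    forall n, (N <= n)%nat -> (1 <= n)%nat ->
    forall u, -1 < u < 1 -> liftU U (Pt n u 0).
Proof.
  intros [_ [HnU|[N HN]]] HUo; [contradiction|].
  exists N; intros n HNn Hn u Hu.
  destruct (HN n HNn Hn u 0) as [[[? _] _]|[_ HU]]; [unfold inDisk; nra|lra|lra|exact HU].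
Qed.

Lemma vertex_nbhd_meets_radius (U : X -> Prop) (n : nat) (Hn : (1 <= n)%nat) :
  cw_open U -> U (vertex n Hn) -> exists u, -1 < u < 1 /\ liftU U (Pt n u 0).
Proof.
  intros HU Hv.
  assert (Hc : cellPre n U 1 0).
  { right; split; [lra|]; exists (vertex n Hn); split; [reflexivity|exact Hv]. }
  destruct (HU n Hn 1 0 ltac:(unfold inDisk; lra) Hc) as [eps [Heps Hop]].
  set (d := Rmin (eps / 2) 1).
  assert (Hd0 : 0 < d) by (apply Rmin_glb_lt; lra).
  assert (Hd1 : d <= 1) by apply Rmin_r.
  assert (Hde : d < eps) by (pose proof (Rmin_l (eps / 2) 1); unfold d in *; lra).
  exists (1 - d); split; [lra|].
  destruct (Hop (1 - d) 0 ltac:(unfold inDisk; nra) ltac:(nra))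
    as [[[? _] _]|[_ HL]]; [lra|exact HL].
Qed.

Lemma continuous_eventually_bounded_on_vertices (g : X -> R) :
  continuous_on (fun _ => True) g ->
  exists (N : nat) (M : R), forall n (Hn : (1 <= n)%nat),
    (N <= n)%nat -> g (vertex n Hn) <= M.
Proof.
  intros Hg; set (g0 := g origin).
  destruct (Hg _ (open_interval (g0 - 1) (g0 + 1))) as [U [HUo HU]].
  assert (HUx : U origin) by (apply (HU origin I); unfold g0; lra).
  destruct (origin_nbhd_contains_radii U HUo HUx) as [N HN].
  exists N, (g0 + 1); intros n Hn HNn.
  apply Rnot_lt_le; intros Hbig.
  destruct (Hg _ (open_interval (g0 + 1) (g (vertex n Hn) + 1))) as [U2 [[HU2 _] HU2g]].
  assert (Hv : U2 (vertex n Hn)) by (apply (HU2g _ I); lra).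
  destruct (vertex_nbhd_meets_radius U2 n Hn HU2 Hv) as [u [Hu HL2]].
  destruct (liftU_meet U U2 _ (HN n HNn Hn u Hu) HL2) as [z [Hz Hz2]].
  apply (HU z I) in Hz; apply (HU2g z I) in Hz2; lra.
Qed.

Theorem mainTheorem9 :
  crs_open (fun z => ~ isA z) /\
  exists (V : X -> X -> Prop) (f : X -> X -> R),
    jinv_section V f /\ ~ in_restriction_image V f.
Proof.
  split; [apply crs_open_of_co_A; auto|].
  exists star, (fun a _ => disk_index a); split; [exact index_section|].
  intros [g [Hg Hgerm]].
  destruct (continuous_eventually_bounded_on_vertices g Hg) as [N [M HM]].
  destruct (INR_unbounded M) as [k Hk].
  set (n := (k + N + 1)%nat).
  assert (Hn : (1 <= n)%nat) by (unfold n; lia).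
  assert (Hkn : INR k <= INR n) by (apply le_INR; unfold n; lia).
  assert (Hval : g (vertex n Hn) = INR n)
    by exact (same_germ_value _ _ _ _ _ (Hgerm _ (vertex_isA n Hn))).
  pose proof (HM n Hn ltac:(unfold n; lia)); lra.
Qed.
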